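(* For integers $k\geq l\geq 0$ and $n\geq 0$, let $q^*_n(k,l)$ be the number of ways to write the vector $(k,l)$ as an unordered sum of $n$ vectors (a vector partition into $n$ parts) each lying in $\{(0,0),(1,0),(0,1),(1,1)\}$, where each of $(0,0)$ and $(1,1)$ is used at most once while $(1,0)$ and $(0,1)$ may be used any number of times. Then $$\{S_{(k,l)'}\}_n=\begin{cases}q^*_n(k,l)-q^*_n(k+1,l-1)&\text{if } l>0,\\ q^*_n(k,l)&\text{if } l=0.\end{cases}$$
   Context: For $i\geq1$, $X_i(\sigma)$ is the number of $i$-cycles of $\sigma$. For a partition $\alpha=1^{a_1}2^{a_2}\cdots$ let $\binom X\alpha=\prod_i\binom{X_i}{a_i}$, $|\alpha|=\sum ia_i$, $l(\alpha)=\sum a_i$. For $m\geq0$ let $E_m=\sum_{\alpha\vdash m}(-1)^{|\alpha|-l(\alpha)}\binom X\alpha$ (so $E_0=1$), and set $E_m=0$ for $m<0$. Define $S_{(k,l)'}=E_kE_l-E_{k+1}E_{l-1}$ (the character polynomial of $W_{(k,l)'}(\mathbb C^n)$, $(k,l)'$ the conjugate partition). The signed moment of $p\in\mathbb C[X_1,X_2,\dotsc]$ is $\{p\}_n=\frac1{n!}\sum_{\sigma\in S_n}\mathrm{sgn}(\sigma)p(X_1(\sigma),X_2(\sigma),\dotsc)$. *)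

From HB Require Import structures.
From mathcomp Require Import all_boot all_order all_algebra all_fingroup.
Set Implicit Arguments. Unset Strict Implicit. Unset Printing Implicit Defensive.
Import Order.TTheory GRing.Theory Num.Theory.
Local Open Scope ring_scope.

Definition cyc (n : nat) (s : 'S_n) (i : nat) : nat :=
  #|[set c in porbits s | #|c| == i]|.

(* A partition alpha = 1^{a_1} 2^{a_2} ... of m is encoded by its multiplicity
   vector a : 'I_m.+1 -> 'I_m.+1 (a i = a_i), with a_0 = 0 and sum i a_i = m. *)
Definition is_partn (m : nat) (a : {ffun 'I_m.+1 -> 'I_m.+1}) : bool :=
  (a ord0 == ord0 :> 'I_m.+1) && (\sum_(i < m.+1) i * a i == m)%N.

Definition binomX (X : nat -> nat) (m : nat) (a : {ffun 'I_m.+1 -> 'I_m.+1}) : nat :=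
  (\prod_(i < m.+1) 'C(X i, a i))%N.

Definition lenp (m : nat) (a : {ffun 'I_m.+1 -> 'I_m.+1}) : nat :=
  (\sum_(i < m.+1) a i)%N.

Definition Ecp (m : nat) (X : nat -> nat) : rat :=
  \sum_(a : {ffun 'I_m.+1 -> 'I_m.+1} | is_partn a)
     (-1) ^+ (m - lenp a) * (binomX X a)%:R.

(* S_{(k,l)'} = E_k E_l - E_{k+1} E_{l-1}, with E_{-1} = 0. *)
Definition Scp (k l : nat) (X : nat -> nat) : rat :=
  Ecp k X * Ecp l X -
  (if l is l'.+1 then Ecp k.+1 X * Ecp l' X else 0).

Definition smoment (n : nat) (p : (nat -> nat) -> rat) : rat :=
  (n`!)%:R^-1 * \sum_(s : 'S_n) (-1) ^+ (odd_perm s) * p (cyc s).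

(* A multiset is its
   multiplicity vector (a,b,c,d) for (0,0),(1,0),(0,1),(1,1); a,d in {0,1},
   and b,c <= n automatically since a+b+c+d = n. *)
Definition qstar (n k l : nat) : nat :=
  #|[set t : 'I_2 * 'I_n.+1 * 'I_n.+1 * 'I_2 |
     let: (a, b, c, d) := t in
     [&& (a + b + c + d == n)%N,
         (b * 1 + c * 0 + d * 1 == k)%N &
         (b * 0 + c * 1 + d * 1 == l)%N]]|.

From mathcomp Require Import all_boot all_order all_algebra all_fingroup.
From mathcomp Require Import primitive_action alt.
From mathcomp Require Import zify.
Import GRing.Theory Num.Theory.
Set Implicit Arguments. Unset Strict Implicit. Unset Printing Implicit Defensive.
Local Open Scope ring_scope.

(* Expanding E_m at the cycle counts of s turns sgn(s) E_k E_l into a signed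
   sum over pairs (P, Q) of sets of cycles of s covering k and l points, each
   term weighted by sgn(s) and the signs (-1)^(|c|-1) of the cycles in P and in
   Q.  Multiplying s by the transposition of two points covered by neither P
   nor Q is a sign-reversing involution, so these terms cancel.  Replacing P
   and Q by their complements in the set of cycles preserves the weight and
   exchanges the points covered by neither with those covered by both, so the
   terms with two doubly covered points cancel as well.  Every remaining term
   has weight 1 and is determined by the s-stable pair (cover P, cover Q); by
   the Cauchy-Frobenius lemma their total number is n! times the number of
   S_n-orbits of such pairs, and an orbit is determined by the sizes of the
   four cells of the pair, i.e. by a vector partition counted by q*_n(k, l). *)

Definition cycle_sign (T : finType) (c : {set T}) : rat := (-1) ^+ (#|c| + 1).

Definition cycles_sign (T : finType) (V : {set {set T}}) : rat :=
  (-1) ^+ (#|cover V| + #|V|).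

Lemma mul_cycle_sign (T : finType) (c : {set T}) : cycle_sign c * cycle_sign c = 1.
Proof. by rewrite -expr2 sqrr_sign. Qed.

Lemma mul_cycles_sign (T : finType) (V : {set {set T}}) :
  cycles_sign V * cycles_sign V = 1.
Proof. by rewrite -expr2 sqrr_sign. Qed.

Section Cycles.
Variables (T : finType) (s : {perm T}).
Implicit Types (V W : {set {set T}}) (A c : {set T}).

Lemma porbitsE c x : c \in porbits s -> x \in c -> porbit s x = c.
Proof. by case/imsetP => y _ -> xy; apply/eqP; rewrite eq_porbit_mem. Qed.

Lemma card_porbits_gt0 c : c \in porbits s -> (0 < #|c|)%N.
Proof. by case/imsetP => y _ ->; rewrite lt0n card_porbit_neq0. Qed.

Lemma mem_cover_porbits V x :
  V \subset porbits s -> (x \in cover V) = (porbit s x \in V).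
Proof.
move=> sV; apply/bigcupP/idP => [[c Vc xc]|]; last by exists (porbit s x); rewrite ?porbit_id.
by rewrite (porbitsE (subsetP sV c Vc) xc).
Qed.

Lemma trivIset_porbits : trivIset (porbits s).
Proof.
apply/trivIsetP => _ _ /imsetP[x _ ->] /imsetP[y _ ->]; apply: contraR.
case/pred0Pn => z /andP[/= zx zy].
by rewrite -(porbitsE _ zx) ?imset_f // -(porbitsE _ zy) ?imset_f.
Qed.

Lemma cover_porbits : cover (porbits s) = setT.
Proof. by apply/setP => x; rewrite (@mem_cover_porbits _ x) // inE imset_f. Qed.

Lemma card_cover_porbits V :
  V \subset porbits s -> #|cover V| = (\sum_(c in V) #|c|)%N.
Proof. by move/trivIsetS/(_ trivIset_porbits)/eqP. Qed.

Lemma card_le_cover_porbits V : V \subset porbits s -> (#|V| <= #|cover V|)%N.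
Proof.
move=> sV; rewrite (card_cover_porbits sV) -sum1_card leq_sum // => c Vc.
exact: card_porbits_gt0 (subsetP sV c Vc).
Qed.

Lemma cover_setD_porbits V :
  V \subset porbits s -> cover (porbits s :\: V) = ~: cover V.
Proof.
move=> sV; apply/setP => x.
by rewrite !inE !mem_cover_porbits ?subsetDl // inE imset_f ?andbT.
Qed.

Lemma card_cover_setD_porbits V :
  V \subset porbits s -> #|cover (porbits s :\: V)| = (#|T| - #|cover V|)%N.
Proof. by move=> sV; rewrite cover_setD_porbits // cardsCs setCK. Qed.

Lemma cover_inj_porbits V W :
  V \subset porbits s -> W \subset porbits s -> cover V = cover W -> V = W.
Proof.
move=> sV sW eVW; apply/setP => c.
have [cs|ncs] := boolP (c \in porbits s); last first.
  by apply/idP/idP => [/(subsetP sV)|/(subsetP sW)]; rewrite (negPf ncs).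
have /imsetP[x _ ->] := cs.
by rewrite -(mem_cover_porbits _ sV) -(mem_cover_porbits _ sW) eVW.
Qed.

Lemma perm_cover_porbits V : V \subset porbits s -> s @: cover V = cover V.
Proof.
move=> sV; apply/eqP; rewrite eqEcard card_imset ?leqnn ?andbT; last exact: perm_inj.
apply/subsetP => _ /imsetP[x xV ->].
by rewrite mem_cover_porbits // -(expg1 s) porbit_perm -mem_cover_porbits.
Qed.

Lemma cover_porbits_sub A :
  s @: A = A -> cover [set c in porbits s | c \subset A] = A.
Proof.
move=> sA; have sub : [set c in porbits s | c \subset A] \subset porbits s.
  by apply/subsetP => c; rewrite inE => /andP[].
apply/setP => x; rewrite mem_cover_porbits // inE imset_f //=.
apply/subsetP/idP => [-> //|xA y]; first exact: porbit_id.
case/porbitP => i ->; elim: i => [|i IHi]; first by rewrite expg0 perm1.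
by rewrite expgSr permM -sA imset_f.
Qed.

Lemma cycles_signE V :
  V \subset porbits s -> cycles_sign V = \prod_(c in V) cycle_sign c.
Proof.
move=> sV; rewrite /cycles_sign (card_cover_porbits sV) -sum1_card -big_split /=.
by rewrite (big_morph (fun e => (-1) ^+ e : rat) (exprD (-1)) (expr0 _)).
Qed.

Lemma odd_perm_cycles_sign : (-1) ^+ odd_perm s = cycles_sign (porbits s).
Proof.
by rewrite /cycles_sign cover_porbits cardsT -[RHS]signr_odd oddD /odd_perm.
Qed.

Lemma cycles_sign_setD V :
  V \subset porbits s ->
  cycles_sign (porbits s :\: V) = cycles_sign (porbits s) * cycles_sign V.
Proof.
move=> sV; rewrite !cycles_signE ?subsetDl // [\prod_(c in porbits s) _](big_setID V) /=.
by rewrite (setIidPr sV) -(cycles_signE sV) mulrAC mul_cycles_sign mul1r.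
Qed.

End Cycles.

Lemma card_blockwise_subsets (I T : finType) (V : I -> {set T}) (a : I -> nat) :
  (forall i j, i != j -> [disjoint V i & V j]) ->
  #|[set P : {set T} | (P \subset \bigcup_i V i) && [forall i, #|P :&: V i| == a i]]| =
  (\prod_i 'C(#|V i|, a i))%N.
Proof.
move=> dV; pose F i := [set Q : {set T} | (Q \subset V i) && (#|Q| == a i)].
have -> : (\prod_i 'C(#|V i|, a i))%N = #|family F|.
  by rewrite card_family foldrE big_image /=; apply: eq_bigr => i _; rewrite cards_draws.
have V_inj i j x : x \in V i -> x \in V j -> i = j.
  by move=> xi xj; case: (eqVneq i j) => // /dV/pred0P/(_ x); rewrite /= xi xj.
pose glue (f : {ffun I -> {set T}}) := \bigcup_i f i.
pose blocks (P : {set T}) := [ffun i => P :&: V i].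
have glueK : {in family F, cancel glue blocks}.
  move=> f /familyP fF; apply/ffunP => i; rewrite ffunE; apply/setP => x.
  have fV j : f j \subset V j by have := fF j; rewrite inE => /andP[].
  apply/setIP/idP => [[/bigcupP[j _ xj] xi]|xi]; last first.
    by split; [apply/bigcupP; exists i | apply: (subsetP (fV i))].
  by rewrite (V_inj i j x) // (subsetP (fV j)).
transitivity #|glue @: family F|; last exact: card_in_imset (can_in_inj glueK).
apply: eq_card => P; rewrite inE; apply/andP/imsetP => [[sP /forallP PV]|[f fF ->]].
  exists (blocks P); first by apply/familyP => i; rewrite ffunE inE subsetIr PV.
  apply/setP => x; apply/idP/bigcupP => [xP|[i _]]; last by rewrite ffunE => /setIP[].
  by have /bigcupP[i _ xi] := subsetP sP x xP; exists i; rewrite // ffunE inE xP.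
split.
  apply/subsetP => x /bigcupP[i _]; rewrite -(glueK f fF) ffunE => /setIP[_ xi].
  by apply/bigcupP; exists i.
apply/forallP => i; have /familyP/(_ i) := fF; rewrite inE => /andP[_].
by have /ffunP/(_ i) := glueK f fF; rewrite ffunE => ->.
Qed.

Lemma sum_card_sizes (T : finType) (P : {set {set T}}) m (f : nat -> nat) :
  {in P, forall c : {set T}, #|c| <= m}%N ->
  (\sum_(c in P) f #|c| = \sum_(i < m.+1) f i * #|[set c in P | #|c| == i]|)%N.
Proof.
move=> Pm; rewrite (partition_big (fun c : {set T} => inord #|c| : 'I_m.+1) xpredT) //=.
apply: eq_bigr => i _; rewrite mulnC -sum_nat_const; apply: eq_big => [c|c].
  rewrite inE; have [cP /=|//] := boolP (c \in P).
  by rewrite -(inj_eq val_inj) /= inordK ?ltnS ?Pm.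
by case/andP=> cP /eqP <-; rewrite inordK ?ltnS ?Pm.
Qed.

Lemma card_le_cover (T : finType) (P : {set {set T}}) c : c \in P -> (#|c| <= #|cover P|)%N.
Proof. by move=> cP; rewrite subset_leq_card // bigcup_sup. Qed.

Definition ncycles (T : finType) (s : {perm T}) (i : nat) : nat :=
  #|[set c in porbits s | #|c| == i]|.

Definition profile (T : finType) m (P : {set {set T}}) : {ffun 'I_m.+1 -> 'I_m.+1} :=
  [ffun i : 'I_m.+1 => inord #|[set c in P | #|c| == i]|].

Section CycleProfile.
Variables (T : finType) (s : {perm T}) (m : nat).

Section SubsetOfCycles.
Variable P : {set {set T}}.
Hypotheses (sP : P \subset porbits s) (coverP : #|cover P| = m).

Lemma profileE i : profile m P i = #|[set c in P | #|c| == i]| :> nat.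
Proof.
rewrite ffunE inordK // ltnS (@leq_trans #|P|) //.
  by apply/subset_leq_card/subsetP => c /[!inE] /andP[].
by rewrite -[X in (_ <= X)%N]coverP (card_le_cover_porbits sP).
Qed.

Lemma sum_card_profile (f : nat -> nat) :
  (\sum_(c in P) f #|c| = \sum_(i < m.+1) f i * profile m P i)%N.
Proof.
rewrite (@sum_card_sizes _ _ m f) => [|c /card_le_cover]; last by rewrite coverP.
by apply: eq_bigr => i _; rewrite profileE.
Qed.

Lemma profile_partn : is_partn (profile m P).
Proof.
apply/andP; split.
  rewrite -(inj_eq val_inj) /= profileE cards_eq0; apply/eqP/setP => c.
  rewrite !inE; apply/negbTE; apply/andP => -[cP].
  by have := card_porbits_gt0 (subsetP sP c cP); rewrite lt0n => /negPf ->.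
by rewrite -[X in _ == X]coverP (card_cover_porbits sP) (sum_card_profile id).
Qed.

Lemma lenp_profile : lenp (profile m P) = #|P|.
Proof.
by rewrite -sum1_card (sum_card_profile (fun=> 1%N)); apply: eq_bigr => i _; rewrite mul1n.
Qed.

Lemma cycles_sign_profile : cycles_sign P = (-1) ^+ (m - lenp (profile m P)).
Proof.
rewrite /cycles_sign lenp_profile coverP -[RHS]signr_odd oddB -?oddD ?signr_odd //.
by rewrite -coverP (card_le_cover_porbits sP).
Qed.

End SubsetOfCycles.

Lemma card_profile_fiber (a : {ffun 'I_m.+1 -> 'I_m.+1}) :
  is_partn a ->
  #|[set P : {set {set T}} | (P \subset porbits s) && (#|cover P| == m) && (profile m P == a)]| =
  binomX (ncycles s) a.
Proof.
case/andP=> _ /eqP sum_a.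
pose V (i : 'I_m.+1) := [set c in porbits s | #|c| == i].
have VE (P : {set {set T}}) i : P \subset porbits s -> P :&: V i = [set c in P | #|c| == i].
  by move=> sP; apply/setP => c; rewrite !inE; case: (boolP (c \in P)) => // /(subsetP sP) ->.
rewrite /binomX -card_blockwise_subsets; last first.
  move=> i j; apply: contraNT => /pred0Pn[c /andP[]].
  rewrite !inE -(inj_eq val_inj) => /andP[_ /eqP ci] /andP[_ /eqP cj].
  by rewrite /= -ci -cj.
apply: eq_card => P; rewrite !inE; apply/andP/andP => [[/andP[sP /eqP coverP] /eqP <-]|].
  split; last by apply/forallP => i; rewrite (VE _ _ sP) (profileE sP coverP).
  apply/subsetP => c cP; apply/bigcupP; exists (inord #|c|) => //.
  by rewrite inE (subsetP sP) //= inordK // ltnS -coverP card_le_cover.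
case=> sPV /forallP /(_ _) /eqP countP.
have sP : P \subset porbits s.
  by apply: subset_trans sPV _; apply/bigcupsP => i _; apply/subsetP => c /[!inE] /andP[].
have Pm : {in P, forall c : {set T}, #|c| <= m}%N.
  by move=> c /(subsetP sPV) /bigcupP[i _] /[!inE] /andP[_ /eqP ->]; rewrite -ltnS.
have coverP : #|cover P| = m.
  rewrite (card_cover_porbits sP) (sum_card_sizes id Pm) -[RHS]sum_a.
  by apply: eq_bigr => i _; rewrite -(VE _ _ sP) countP.
split; first by rewrite sP coverP eqxx.
apply/eqP/ffunP => i; apply: val_inj.
by rewrite /= (profileE sP coverP) -(VE _ _ sP) countP.
Qed.

End CycleProfile.

Lemma Ecp_porbits (T : finType) (s : {perm T}) m :
  Ecp m (ncycles s) =
  \sum_(P : {set {set T}} | (P \subset porbits s) && (#|cover P| == m)) cycles_sign P.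
Proof.
rewrite (partition_big (@profile T m) (@is_partn m)) /=; last first.
  by move=> P /andP[sP /eqP coverP]; apply: profile_partn sP coverP.
apply: eq_bigr => a partn_a.
rewrite (eq_bigr (fun=> (-1) ^+ (m - lenp a))); last first.
  by move=> P /andP[/andP[sP /eqP coverP] /eqP <-]; exact: cycles_sign_profile sP coverP.
by rewrite -big_set sumr_const (card_profile_fiber s partn_a) mulr_natr.
Qed.

Lemma sum_sign_reversing (R : numDomainType) (I : finType) (P : pred I) (h : I -> I)
    (F : I -> R) :
  involutive h -> {in P, forall i, P (h i) /\ F (h i) = - F i} ->
  \sum_(i | P i) F i = 0.
Proof.
move=> hK hP; set S := \sum_(i | P i) F i.
have SN : S = - S.
  rewrite {1}/S (reindex_inj (can_inj hK)) /= -sumrN.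
  apply: eq_big => [i|i /hP[]]; last by rewrite hK => _ ->; rewrite opprK.
  by apply/idP/idP => [/hP[]|/hP[] //]; rewrite hK.
have : S *+ 2 == 0 by rewrite mulr2n {1}SN addNr.
by rewrite mulrn_eq0 => /eqP.
Qed.

Notation config T := ({perm T} * ({set {set T}} * {set {set T}}))%type.

Section Configurations.
Variable T : finType.
Implicit Types (s : {perm T}) (P Q : {set {set T}}) (z : config T).

Definition uncovered P Q := ~: (cover P :|: cover Q).

Definition bicovered P Q := cover P :&: cover Q.

Definition marked k l z :=
  [&& z.2.1 \subset porbits z.1, z.2.2 \subset porbits z.1,
      #|cover z.2.1| == k & #|cover z.2.2| == l].

Definition weight z : rat :=
  (-1) ^+ odd_perm z.1 * cycles_sign z.2.1 * cycles_sign z.2.2.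

Lemma signed_Ecp_product s k l :
  (-1) ^+ odd_perm s * (Ecp k (ncycles s) * Ecp l (ncycles s)) =
  \sum_(PQ | marked k l (s, PQ)) weight (s, PQ).
Proof.
rewrite !Ecp_porbits mulr_suml mulr_sumr.
under eq_bigr do rewrite !mulr_sumr.
rewrite pair_big_dep /=; apply: eq_big => [[P Q]|[P Q] _]; last by rewrite /weight !mulrA.
by rewrite /marked /= -!andbA; do !bool_congr.
Qed.

Lemma porbit_mul_tperm s x y u :
  x \notin porbit s u -> y \notin porbit s u ->
  porbit (tperm x y * s)%g u = porbit s u.
Proof.
move=> xu yu; have iterE i : ((tperm x y * s) ^+ i)%g u = (s ^+ i)%g u.
  elim: i => [|i IHi]; first by rewrite !expg0.
  rewrite !expgSr !permM IHi tpermD //.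
    by apply: contraNneq xu => ->; apply: mem_porbit.
  by apply: contraNneq yu => ->; apply: mem_porbit.
by apply/setP => v; apply/porbitP/porbitP => -[i ->]; exists i; rewrite iterE.
Qed.

Lemma sub_porbits_mul_tperm s x y P :
  x \notin cover P -> y \notin cover P -> P \subset porbits s ->
  P \subset porbits (tperm x y * s)%g.
Proof.
move=> xP yP sP; apply/subsetP => c Pc; have /imsetP[u _ cu] := subsetP sP c Pc.
have notin_c v : v \notin cover P -> v \notin porbit s u.
  by apply: contra; rewrite -cu => vc; apply/bigcupP; exists c.
by rewrite cu -(porbit_mul_tperm (notin_c x xP) (notin_c y yP)) imset_f.
Qed.

Lemma marked_mul_tperm k l s x y P Q :
  x \in uncovered P Q -> y \in uncovered P Q ->
  marked k l ((tperm x y * s)%g, (P, Q)) = marked k l (s, (P, Q)).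
Proof.
rewrite !inE !negb_or => /andP[xP xQ] /andP[yP yQ].
have subE V : x \notin cover V -> y \notin cover V ->
    (V \subset porbits (tperm x y * s)%g) = (V \subset porbits s).
  move=> xV yV; apply/idP/idP; last exact: sub_porbits_mul_tperm.
  by rewrite -{2}[s]mul1g -(tperm2 x y) -mulgA; apply: sub_porbits_mul_tperm.
by rewrite /marked /= !subE.
Qed.

Definition swap_uncovered z : config T :=
  if enum (uncovered z.2.1 z.2.2) is x :: y :: _ then ((tperm x y * z.1)%g, z.2) else z.

Lemma swap_uncoveredK : involutive swap_uncovered.
Proof.
move=> [s [P Q]]; rewrite {2}/swap_uncovered /=.
by case E: (enum _) => [|x [|y r]]; rewrite /swap_uncovered /= E // mulgA tperm2 mul1g.
Qed.

Lemma sum_weight_many_uncovered k l (R : pred ({set {set T}} * {set {set T}})) :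
  \sum_(z | marked k l z && (1 < #|uncovered z.2.1 z.2.2|)%N && R z.2) weight z = 0.
Proof.
apply: sum_sign_reversing swap_uncoveredK _ => -[s [P Q]].
rewrite unfold_in /= cardE /swap_uncovered /=.
case E: (enum (uncovered P Q)) => [|x [|y r]]; rewrite /= ?andbF // => /andP[/andP[mz _] RPQ].
have xy : x != y.
  by have := enum_uniq (uncovered P Q); rewrite E /= inE negb_or => /andP[/andP[]].
have xA : x \in uncovered P Q by rewrite -mem_enum E mem_head.
have yA : y \in uncovered P Q by rewrite -mem_enum E !inE eqxx orbT.
rewrite marked_mul_tperm // mz cardE E RPQ; split => //.
by rewrite /weight /= odd_mul_tperm xy /= signrN !mulNr.
Qed.

Definition complement z : config T :=
  (z.1, (porbits z.1 :\: z.2.1, porbits z.1 :\: z.2.2)).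

Lemma complementK_eq z :
  (complement (complement z) == z) = (z.2.1 \subset porbits z.1) && (z.2.2 \subset porbits z.1).
Proof.
have setDK (U V : {set {set T}}) : (U :\: (U :\: V) == V) = (V \subset U).
  by rewrite setDDr setDv set0U; apply/eqP/setIidPr.
by case: z => s [P Q]; rewrite /complement /= !xpair_eqE eqxx !setDK.
Qed.

Section Complement.
Variables (s : {perm T}) (P Q : {set {set T}}).
Hypotheses (sP : P \subset porbits s) (sQ : Q \subset porbits s).

Lemma uncovered_complement :
  uncovered (porbits s :\: P) (porbits s :\: Q) = bicovered P Q.
Proof. by rewrite /uncovered !cover_setD_porbits // -setCI setCK. Qed.

Lemma bicovered_complement :
  bicovered (porbits s :\: P) (porbits s :\: Q) = uncovered P Q.
Proof. by rewrite /bicovered !cover_setD_porbits // -setCU. Qed.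

Lemma marked_complement k l :
  (k <= #|T|)%N -> (l <= #|T|)%N ->
  marked k l (complement (s, (P, Q))) = marked (#|T| - k)%N (#|T| - l)%N (s, (P, Q)).
Proof.
move=> kT lT; rewrite /marked /= !subsetDl sP sQ !card_cover_setD_porbits //=.
have PT : (#|cover P| <= #|T|)%N := max_card _.
have QT : (#|cover Q| <= #|T|)%N := max_card _.
set n := #|T| in kT lT PT QT *.
by congr (_ && _); apply/eqP/eqP; lia.
Qed.

Lemma weight_complement : weight (complement (s, (P, Q))) = weight (s, (P, Q)).
Proof.
rewrite /weight /= !cycles_sign_setD // odd_perm_cycles_sign.
by rewrite [_ * (_ * cycles_sign P)]mulrA mul_cycles_sign mul1r mulrCA mulrA.
Qed.

End Complement.

Lemma sum_weight_many_bicovered k l :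
  \sum_(z | marked k l z && (#|uncovered z.2.1 z.2.2| <= 1)%N &&
           (1 < #|bicovered z.2.1 z.2.2|)%N) weight z = 0.
Proof.
have coverT V : (#|cover V| <= #|T|)%N := max_card _.
have [kT|Tk] := leqP k #|T|; last first.
  rewrite big1 // => z /andP[/andP[/and4P[_ _ /eqP cP _] _] _].
  by move: (coverT z.2.1); rewrite cP leqNgt Tk.
have [lT|Tl] := leqP l #|T|; last first.
  rewrite big1 // => z /andP[/andP[/and4P[_ _ _ /eqP cQ] _] _].
  by move: (coverT z.2.2); rewrite cQ leqNgt Tl.
rewrite (reindex_onto complement complement); last first.
  by move=> z /andP[/andP[/and4P[sP sQ _ _] _] _]; apply/eqP; rewrite complementK_eq sP.
rewrite -[RHS](sum_weight_many_uncovered (#|T| - k)%N (#|T| - l)%N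
                 (fun PQ => #|bicovered PQ.1 PQ.2| <= 1)%N).
apply: eq_big => -[s [P Q]]; rewrite complementK_eq /=; last first.
  by case/andP=> _ /andP[sP sQ]; apply: weight_complement.
have [sP|nsP] := boolP (P \subset porbits s); last by rewrite /marked /= (negPf nsP) !andbF.
have [sQ|nsQ] := boolP (Q \subset porbits s); last by rewrite /marked /= (negPf nsQ) !andbF.
rewrite marked_complement // uncovered_complement // bicovered_complement //.
by case: (_ <= 1)%N; case: (1 < _)%N; rewrite ?andbT ?andbF.
Qed.

Lemma weight_few_covered k l z :
  marked k l z -> (#|uncovered z.2.1 z.2.2| <= 1)%N -> (#|bicovered z.2.1 z.2.2| <= 1)%N ->
  weight z = 1.
Proof.
case: z => s [P Q] /and4P[/= sP sQ _ _] /= unc1 bic1.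
have extend (V : {set {set T}}) : V \subset porbits s ->
    \prod_(c in V) cycle_sign c = \prod_(c in porbits s) (if c \in V then cycle_sign c else 1).
  by move=> sV; rewrite -big_mkcondr; apply: eq_bigl => c; rewrite andb_idl // => /(subsetP sV).
rewrite /weight /= odd_perm_cycles_sign (cycles_signE sP) (cycles_signE sQ).
rewrite (cycles_signE (subxx _)) (extend P) // (extend Q) // (extend _ (subxx _)).
rewrite -!big_split /=; apply: big1 => c cs; rewrite cs.
have sign1 (A : {set T}) : c \subset A -> (#|A| <= 1)%N -> cycle_sign c = 1.
  move=> cA A1; have: #|c| = 1%N.
    by apply/eqP; rewrite eqn_leq (card_porbits_gt0 cs) (leq_trans (subset_leq_card cA)).
  by rewrite /cycle_sign => ->; rewrite expr2 mulrNN mulr1.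
have cover_c (V : {set {set T}}) x : V \subset porbits s -> x \in c -> (x \in cover V) = (c \in V).
  by move=> sV xc; rewrite (mem_cover_porbits _ sV) (porbitsE cs xc).
case cP: (c \in P); case cQ: (c \in Q); rewrite ?mulr1 ?mul_cycle_sign //.
  rewrite (sign1 (bicovered P Q)) ?mulr1 //.
  by apply/subsetP => x xc; rewrite inE (cover_c P) // (cover_c Q) // cP cQ.
apply: (sign1 (uncovered P Q)) => //.
by apply/subsetP => x xc; rewrite !inE (cover_c P) // (cover_c Q) // cP cQ.
Qed.

Definition few_covered k l s :=
  [set PQ | marked k l (s, PQ) && (#|uncovered PQ.1 PQ.2| <= 1)%N &&
            (#|bicovered PQ.1 PQ.2| <= 1)%N].

Lemma sum_signed_Ecp_product k l :
  \sum_(s : {perm T}) (-1) ^+ odd_perm s * (Ecp k (ncycles s) * Ecp l (ncycles s)) =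
  (\sum_(s : {perm T}) #|few_covered k l s|)%:R.
Proof.
under eq_bigr do rewrite signed_Ecp_product.
rewrite pair_big_dep (eq_bigl (marked k l)) => [|[]//].
rewrite (eq_bigr weight) => [|[]//].
rewrite (bigID (fun z => 1 < #|uncovered z.2.1 z.2.2|)%N) /= [X in X + _](_ : _ = 0); last first.
  by apply: etrans (sum_weight_many_uncovered k l xpredT); apply: eq_bigl => z; rewrite andbT.
rewrite add0r (bigID (fun z => 1 < #|bicovered z.2.1 z.2.2|)%N) /= [X in X + _](_ : _ = 0); last first.
  by apply: etrans (sum_weight_many_bicovered k l); apply: eq_bigl => z; rewrite -leqNgt.
rewrite add0r (eq_bigr (fun=> 1)) => [|z]; last first.
  by rewrite -!leqNgt => /andP[/andP[]]; apply: weight_few_covered.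
rewrite natr_sum; under [RHS]eq_bigr do rewrite -sumr_const.
rewrite pair_big_dep /=; apply: eq_bigl => -[s PQ].
by rewrite inE -!leqNgt.
Qed.

End Configurations.

Lemma perm_map_uniq (T : finType) (s t : seq T) :
  uniq s -> uniq t -> size s = size t -> exists g : {perm T}, map g s = t.
Proof.
move=> us ut st; have le_sT : (size s <= #|T|)%N by rewrite -(card_uniqP us) max_card.
have trans_s := ntransitive_weak le_sT (Sym_trans T).
pose ts := in_tuple s; pose tt : (size s).-tuple T := Tuple (introT eqP (esym st)).
have dtuple_on_T (u : (size s).-tuple T) : uniq u -> u \in (size s).-dtuple(setT).
  by move=> uu; rewrite inE uu; apply/subsetP => x; rewrite inE.
have [g _ /(congr1 val) /= gst] := atransP2 trans_s (dtuple_on_T ts us) (dtuple_on_T tt ut).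
by exists g; rewrite gst; apply: eq_map => x; rewrite apermE.
Qed.

Section PairAction.
Variable T : finType.
Implicit Types (A B : {set T}) (x : {set T} * {set T}) (g : {perm T}).

Definition pair_act x g := (g @: x.1, g @: x.2).

Lemma pair_act1 : pair_act^~ 1%g =1 id.
Proof. by move=> [A B]; rewrite /pair_act /= !(eq_imset _ (@perm1 _)) !imset_id. Qed.

Lemma pair_actM x : act_morph pair_act x.
Proof.
move=> g h; case: x => A B; rewrite /pair_act /= -!imset_comp.
by congr (_, _); apply: eq_imset => y; rewrite permM.
Qed.

Definition pair_action := TotalAction pair_act1 pair_actM.

Lemma card_pair_act x g :
  [/\ #|(pair_act x g).1| = #|x.1|, #|(pair_act x g).2| = #|x.2|,
      #|(pair_act x g).1 :&: (pair_act x g).2| = #|x.1 :&: x.2| &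
      #|(pair_act x g).1 :|: (pair_act x g).2| = #|x.1 :|: x.2|].
Proof.
case: x => A B; rewrite /pair_act /= -imsetU -imsetI; last by move=> ? ? _ _; apply: perm_inj.
by split; rewrite card_imset //; apply: perm_inj.
Qed.

Lemma uniq_cells A B : uniq (enum (A :\: B) ++ enum (A :&: B) ++ enum (B :\: A)).
Proof.
rewrite !cat_uniq !enum_uniq has_cat /= !andbT negb_or -andbA; apply/and3P; split; apply/hasPn => y;
  by rewrite /= !mem_enum !inE; case: (y \in A); case: (y \in B).
Qed.

Lemma pair_act_cells A B A' B' :
  #|A :\: B| = #|A' :\: B'| -> #|A :&: B| = #|A' :&: B'| -> #|B :\: A| = #|B' :\: A'| ->
  exists g, pair_act (A, B) g = (A', B').
Proof.
move=> eD eI eD'.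
have [|g] := perm_map_uniq (uniq_cells A B) (uniq_cells A' B').
  by rewrite !size_cat -!cardE eD eI eD'.
rewrite !map_cat => /eqP; rewrite !eqseq_cat ?size_map -?cardE //.
case/and3P => /eqP gD /eqP gI /eqP gD'.
have imset_enum (X X' : {set T}) : map g (enum X) = enum X' -> g @: X = X'.
  move=> gX; apply/setP => y; rewrite -[y \in X']mem_enum -gX.
  by apply/imsetP/mapP => -[z]; rewrite ?mem_enum; exists z; rewrite ?mem_enum.
exists g; rewrite /pair_act /=; congr (_, _).
  rewrite -[in LHS](setID A B) -(setID A' B') imsetU.
  by rewrite (imset_enum _ _ gI) (imset_enum _ _ gD).
rewrite -[in LHS](setID B A) -(setID B' A') imsetU setIC.
by rewrite (imset_enum _ _ gI) (imset_enum _ _ gD') setIC.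
Qed.

Definition thin_pairs k l : {set {set T} * {set T}} :=
  [set x : {set T} * {set T} | [&& #|x.1| == k, #|x.2| == l,
              #|~: (x.1 :|: x.2)| <= 1 & #|x.1 :&: x.2| <= 1]%N].

Lemma acts_thin_pairs k l : [acts [set: {perm T}], on thin_pairs k l | pair_action].
Proof.
apply/subsetP => g _; apply/astabsP => x; rewrite !inE /=.
have [-> -> -> UE] := card_pair_act x g.
suff -> : #|~: ((pair_act x g).1 :|: (pair_act x g).2)| = #|~: (x.1 :|: x.2)| by [].
by apply/eqP; rewrite -(eqn_add2l #|x.1 :|: x.2|) cardsC -{1}UE cardsC.
Qed.

Lemma card_few_covered_fix s k l :
  #|few_covered k l s| = #|('Fix_(thin_pairs k l | pair_action)[s])%g|.
Proof.
pose covers (PQ : {set {set T}} * {set {set T}}) := (cover PQ.1, cover PQ.2).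
have covers_inj : {in few_covered k l s &, injective covers}.
  move=> [P Q] [P' Q'] /[!inE] /andP[/andP[/and4P[/= sP sQ _ _] _] _].
  move=> /andP[/andP[/and4P[/= sP' sQ' _ _] _] _] [eP eQ].
  by rewrite (cover_inj_porbits sP sP' eP) (cover_inj_porbits sQ sQ' eQ).
rewrite -(card_in_imset covers_inj); apply: eq_card => -[A B].
apply/imsetP/setIP => [[[P Q]]|[]].
  rewrite inE => /andP[/andP[/and4P[/= sP sQ /eqP cP /eqP cQ] unc1] bic1] [-> ->].
  split; last by apply/afix1P; rewrite /= /pair_act /= !perm_cover_porbits.
  by rewrite inE /= cP cQ !eqxx; apply/and4P; split.
rewrite inE /= => /and4P[/eqP cA /eqP cB unc1 bic1] /afix1P[/= sA sB].
have sub (C : {set T}) : [set c in porbits s | c \subset C] \subset porbits s.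
  by apply/subsetP => c /[!inE] /andP[].
exists ([set c in porbits s | c \subset A], [set c in porbits s | c \subset B]).
  by rewrite inE /marked /uncovered /bicovered /= !sub !cover_porbits_sub // cA cB !eqxx unc1.
by rewrite /covers /= !cover_porbits_sub.
Qed.

End PairAction.

Lemma card_imset_eqrel (T U V : finType) (X : {set T}) (f : T -> U) (g : T -> V) :
  {in X &, forall x y, (f x == f y) = (g x == g y)} -> #|f @: X| = #|g @: X|.
Proof.
move=> fg; pose h x := (f x, g x).
have fst_inj : {in h @: X &, injective fst}.
  move=> _ _ /imsetP[x xX ->] /imsetP[y yX ->] /= e.
  by rewrite /h e; congr (_, _); apply/eqP; rewrite -fg // e.
have snd_inj : {in h @: X &, injective snd}.
  move=> _ _ /imsetP[x xX ->] /imsetP[y yX ->] /= e.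
  by rewrite /h e; congr (_, _); apply/eqP; rewrite fg // e.
have -> : f @: X = fst @: (h @: X) by rewrite -imset_comp.
have -> : g @: X = snd @: (h @: X) by rewrite -imset_comp.
by rewrite (card_in_imset fst_inj) (card_in_imset snd_inj).
Qed.

Lemma card_ord_prefix n j : (j <= n)%N -> #|[set i : 'I_n | (i < j)%N]| = j.
Proof.
move=> jn; have -> : [set i : 'I_n | (i < j)%N] = widen_ord jn @: [set: 'I_j].
  apply/setP => i; rewrite inE; apply/idP/imsetP => [ij|[m _ ->]]; last by rewrite /= ltn_ord.
  by exists (Ordinal ij); last apply: val_inj.
by rewrite card_imset ?cardsT ?card_ord // => u v /(congr1 val) /= /val_inj.
Qed.

Section ThinPairOrbits.
Variables n k l : nat.
Implicit Types x y : {set 'I_n} * {set 'I_n}.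

Definition cell_type x : 'I_2 * 'I_n.+1 * 'I_n.+1 * 'I_2 :=
  (inord #|~: (x.1 :|: x.2)|, inord #|x.1 :\: x.2|, inord #|x.2 :\: x.1|, inord #|x.1 :&: x.2|).

Lemma card_setC_ord (Y : {set 'I_n}) : #|~: Y| = (n - #|Y|)%N.
Proof. by rewrite -[X in (X - _)%N](card_ord n) -(cardsC Y) addKn. Qed.

Lemma card_le_ord (Y : {set 'I_n}) : (#|Y| <= n)%N.
Proof. by rewrite -[X in (_ <= X)%N](card_ord n) max_card. Qed.

Lemma cell_type_pair_act x g : cell_type (pair_act x g) = cell_type x.
Proof.
have [c1 c2 cI cU] := card_pair_act x g.
by rewrite /cell_type !card_setC_ord !cardsD ![_.2 :&: _.1]setIC cU c1 c2 cI.
Qed.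

Lemma orbit_eq_cell_type :
  {in thin_pairs 'I_n k l &, forall x y,
    (orbit (pair_action _) [set: {perm 'I_n}] x == orbit (pair_action _) [set: {perm 'I_n}] y)
    = (cell_type x == cell_type y)}.
Proof.
move=> x y xX yX; apply/eqP/eqP => [eo|].
  have : y \in orbit (pair_action _) [set: {perm 'I_n}] x by rewrite eo orbit_refl.
  by case/orbitP => g _ <-; rewrite cell_type_pair_act.
have inord_inj m i j : (i < m.+1)%N -> (j < m.+1)%N -> inord i = inord j :> 'I_m.+1 -> i = j.
  by move=> im jm /(congr1 val); rewrite /= !inordK.
have le_n (Y : {set 'I_n}) : (#|Y| < n.+1)%N by rewrite ltnS card_le_ord.
case: x y xX yX => A B [A' B'] /[!inE] /and4P[_ _ _ AB1] /and4P[_ _ _ AB1'] [_ eD eD' eI].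
have [g eg] := pair_act_cells (inord_inj _ _ _ (le_n _) (le_n _) eD)
  (inord_inj _ _ _ AB1 AB1' eI) (inord_inj _ _ _ (le_n _) (le_n _) eD').
by apply/orbit_eqP; rewrite orbit_sym -eg; apply: mem_orbit; rewrite inE.
Qed.

Lemma card_cell_types : #|cell_type @: thin_pairs 'I_n k l| = qstar n k l.
Proof.
rewrite /qstar; apply: eq_card => -[[[a b] c] d]; rewrite !inE; apply/imsetP/idP => [[[A B]]|].
  rewrite inE /= => /and4P[/eqP <- /eqP <- unc1 AB1] [-> -> -> ->].
  have cD' : #|B :\: A| = (#|B| - #|A :&: B|)%N by rewrite cardsD setIC.
  move: (cardsU A B) (cardsD A B) (card_le_ord (A :|: B)) unc1; rewrite card_setC_ord.
  move: (subset_leq_card (subsetIl A B)) (subset_leq_card (subsetIr A B)) => IA IB cU cD Un unc1.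
  move: (card_le_ord (A :\: B)) (card_le_ord (B :\: A)) => DAn DBn.
  set i := #|A :&: B| in AB1 IA IB cU cD cD' *; set u := #|A :|: B| in cU Un unc1 *.
  set dA := #|A :\: B| in cD DAn *; set dB := #|B :\: A| in cD' DBn *.
  set cA := #|A| in IA cU cD *; set cB := #|B| in IB cU cD' *.
  by rewrite !inordK; try lia; apply/and3P; split; apply/eqP; lia.
case/and3P => /eqP abcd /eqP bdk /eqP dcl; have := ltn_ord a; have := ltn_ord d.
pose pre j := [set i : 'I_n | (i < j)%N].
have card_seg j1 j2 : (j1 <= j2)%N -> (j2 <= n)%N -> #|pre j2 :\: pre j1| = (j2 - j1)%N.
  move=> j12 j2n; rewrite cardsDS ?card_ord_prefix //; first lia.
  by apply/subsetP => i; rewrite !inE; lia.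
pose A := pre (b + d)%N; pose B := pre (b + d + c)%N :\: pre b.
have eD : A :\: B = pre b :\: pre 0 by apply/setP => i; rewrite !inE; lia.
have eI : A :&: B = pre (b + d)%N :\: pre b by apply/setP => i; rewrite !inE; lia.
have eD' : B :\: A = pre (b + d + c)%N :\: pre (b + d)%N by apply/setP => i; rewrite !inE; lia.
have eU : A :|: B = pre (b + d + c)%N :\: pre 0 by apply/setP => i; rewrite !inE; lia.
move=> d2 a2; exists (A, B).
  rewrite inE /= card_setC_ord eU eI card_ord_prefix; last lia.
  by rewrite !card_seg; lia.
rewrite /cell_type /= card_setC_ord eU eD eD' eI !card_seg; try lia.
by congr (_, _, _, _); apply: val_inj; rewrite /= inordK //; lia.
Qed.

End ThinPairOrbits.

Lemma card_orbits_thin_pairs n k l :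
  #|orbit (pair_action _) [set: {perm 'I_n}] @: thin_pairs 'I_n k l| = qstar n k l.
Proof. by rewrite -card_cell_types; apply: card_imset_eqrel (@orbit_eq_cell_type n k l). Qed.

Lemma sum_card_few_covered n k l :
  (\sum_(s : {perm 'I_n}) #|few_covered k l s|)%N = (n`! * qstar n k l)%N.
Proof.
under eq_bigr do rewrite card_few_covered_fix.
have := Frobenius_Cauchy (acts_thin_pairs 'I_n k l).
rewrite cardsT card_Sn card_orbits_thin_pairs mulnC => <-.
by apply: eq_bigl => s; rewrite inE.
Qed.

Lemma smoment_Ecp_product n k l :
  smoment n (fun X => Ecp k X * Ecp l X) = (qstar n k l)%:R.
Proof.
have cycE (s : 'S_n) : cyc s = ncycles s by [].
rewrite /smoment; under eq_bigr do rewrite cycE.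
rewrite sum_signed_Ecp_product sum_card_few_covered natrM mulKf //.
by rewrite pnatr_eq0 -lt0n fact_gt0.
Qed.

Lemma smomentB n (p q : (nat -> nat) -> rat) :
  smoment n (fun X => p X - q X) = smoment n p - smoment n q.
Proof. by rewrite /smoment -mulrBr -sumrB; under eq_bigr do rewrite mulrBr. Qed.

Theorem corollary3p3 (k l n : nat) (hlk : (l <= k)%N) :
  smoment n (Scp k l) =
  if (0 < l)%N then (qstar n k l)%:R - (qstar n k.+1 l.-1)%:R
  else (qstar n k l)%:R.
Proof.
case: l hlk => [|l] _; rewrite /Scp smomentB !smoment_Ecp_product //=.
by rewrite /smoment big1 ?mulr0 ?subr0 // => s _; rewrite mulr0.
Qed.
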